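(* For every countable ordinal $\lambda<\omega_1$ there is a continuous map $f_\lambda:[0,1]\to[0,1]$ such that the chain components poset $(\mathfrak{C}_{f_\lambda},\preceq)$ is order isomorphic to the ordinal $\lambda+1$ with its usual order $\in$.
   Context: For a map $f:[0,1]\to[0,1]$ with the usual metric: an $\varepsilon$-chain from $x$ to $y$ is a finite sequence $x_0=x,\dots,x_n=y$, $n\ge1$, with $|f(x_i)-x_{i+1}|<\varepsilon$; $x\,\mathcal{C}\,y$ iff for every $\varepsilon>0$ there is an $\varepsilon$-chain from $x$ to $y$; $CR_f=\{x:x\,\mathcal{C}\,x\}$; $x\,E\,y$ iff $x\,\mathcal{C}\,y$ and $y\,\mathcal{C}\,x$; $\mathfrak{C}_f=CR_f/E$ is the set of chain components, partially ordered by $[x]\preceq[y]$ iff $y\,\mathcal{C}\,x$. *)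

From Stdlib Require Import Reals.
Open Scope R_scope.

Definition I01 (x : R) : Prop := 0 <= x <= 1.

Definition maps_I01 (f : R -> R) : Prop := forall x, I01 x -> I01 (f x).

Definition eps_chain (f : R -> R) (eps x y : R) : Prop :=
  exists (n : nat) (s : nat -> R),
    (1 <= n)%nat /\ s 0%nat = x /\ s n = y /\
    (forall i, (i <= n)%nat -> I01 (s i)) /\
    (forall i, (i < n)%nat -> Rabs (f (s i) - s (S i)) < eps).

Definition chain_rel (f : R -> R) (x y : R) : Prop :=
  forall eps, 0 < eps -> eps_chain f eps x y.

Definition CR (f : R -> R) (x : R) : Prop := I01 x /\ chain_rel f x x.

Definition chainE (f : R -> R) (x y : R) : Prop :=
  chain_rel f x y /\ chain_rel f y x.

Definition is_chain_component (f : R -> R) (A : R -> Prop) : Prop :=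
  exists x, CR f x /\ A = (fun y => CR f y /\ chainE f x y).

Definition ChainComp (f : R -> R) : Type := {A : R -> Prop | is_chain_component f A}.

Definition comp_le (f : R -> R) (A B : ChainComp f) : Prop :=
  exists x y, proj1_sig A x /\ proj1_sig B y /\ chain_rel f y x.

(* countable strict well-orders (models of countable ordinals lambda) *)
Definition countable_type (T : Type) : Prop :=
  exists g : T -> nat, forall a b, g a = g b -> a = b.

Definition strict_well_order (T : Type) (lt : T -> T -> Prop) : Prop :=
  (forall a, ~ lt a a) /\
  (forall a b c, lt a b -> lt b c -> lt a c) /\
  (forall a b, lt a b \/ a = b \/ lt b a) /\
  well_founded lt.

(* lambda + 1 = lambda u {lambda}: option T with None as the new top element *)
Definition succ_lt (T : Type) (lt : T -> T -> Prop) (a b : option T) : Prop :=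
  match a, b with
  | Some a', Some b' => lt a' b'
  | Some _, None => True
  | None, _ => False
  end.

Definition succ_le (T : Type) (lt : T -> T -> Prop) (a b : option T) : Prop :=
  a = b \/ succ_lt T lt a b.

Definition order_iso (A B : Type) (leA : A -> A -> Prop) (leB : B -> B -> Prop)
  (h : A -> B) : Prop :=
  (forall a1 a2, h a1 = h a2 -> a1 = a2) /\
  (forall b, exists a, h a = b) /\
  (forall a1 a2, leA a1 a2 <-> leB (h a1) (h a2)).

(* Give each element [a] of the well-order lambda+1 the weight 2^-(code a + 1),
   for an injection [code] into nat, and send [a] to the total weight strictly
   below it.  This embedding is strictly increasing, leaves a gap of length
   2^-(code a + 1) just above the image of [a], and its image K is closed: a
   limit is sent to the supremum of the images below it, and the top element
   bounds everything.  For f z = z - dist(z, K) every point of K is fixed and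
   f never moves a point past a point of K.  An eps-chain can therefore descend
   to any lower point of K, but can never climb across a point c outside K,
   because f pushes everything below c down by at least dist(c, K) > 0.  Hence
   CR_f = K, chain classes are singletons, and [x] <= [y] iff x <= y. *)

From Stdlib Require Import Reals Lra Lia Classical ClassicalDescription
  IndefiniteDescription ProofIrrelevance FunctionalExtensionality PropExtensionality.
Open Scope R_scope.

(** * Dyadic masses of sets of naturals *)

Definition dyadic_digit (A : nat -> Prop) (n : nat) : R :=
  if excluded_middle_informative (A n) then (/2) ^ S n else 0.

Fixpoint dyadic_partial (A : nat -> Prop) (N : nat) : R :=
  match N with
  | O => 0
  | S N' => dyadic_partial A N' + dyadic_digit A N'
  end.

Lemma half_pow_pos n : 0 < (/2) ^ n.
Proof. apply pow_lt; lra. Qed.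

Lemma dyadic_digit_bounds A n : 0 <= dyadic_digit A n <= (/2) ^ S n.
Proof.
  unfold dyadic_digit; destruct excluded_middle_informative;
    pose proof (half_pow_pos (S n)); lra.
Qed.

Lemma dyadic_partial_shift A N k :
  dyadic_partial A N <= dyadic_partial A (N + k) <=
  dyadic_partial A N + (/2) ^ N - (/2) ^ (N + k).
Proof.
  induction k as [|k IH]; rewrite ?Nat.add_0_r, ?Nat.add_succ_r; [lra|].
  pose proof (dyadic_digit_bounds A (N + k)) as Hd; simpl in *; lra.
Qed.

Lemma dyadic_partial_le A M N : dyadic_partial A M <= dyadic_partial A N + (/2) ^ N.
Proof.
  destruct (Nat.le_ge_cases M N) as [HMN|HNM].
  - replace N with (M + (N - M))%nat by lia.
    pose proof (dyadic_partial_shift A M (N - M)).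
    pose proof (half_pow_pos (M + (N - M))); lra.
  - replace M with (N + (M - N))%nat by lia.
    pose proof (dyadic_partial_shift A N (M - N)).
    pose proof (half_pow_pos (N + (M - N))); lra.
Qed.

Lemma dyadic_digit_in (A : nat -> Prop) n : A n -> dyadic_digit A n = (/2) ^ S n.
Proof. intros HA; unfold dyadic_digit; destruct excluded_middle_informative; tauto. Qed.

Lemma dyadic_digit_out (A : nat -> Prop) n : ~ A n -> dyadic_digit A n = 0.
Proof. intros HA; unfold dyadic_digit; destruct excluded_middle_informative; tauto. Qed.

Lemma dyadic_digit_mono (A B : nat -> Prop) n :
  (A n -> B n) -> dyadic_digit A n <= dyadic_digit B n.
Proof.
  intros AB. unfold dyadic_digit.
  destruct (excluded_middle_informative (A n)) as [HA|HA],
           (excluded_middle_informative (B n)) as [HB|HB]; try lra.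
  - exfalso; auto.
  - pose proof (half_pow_pos (S n)); lra.
Qed.

Lemma dyadic_partial_mono (A B : nat -> Prop) N :
  (forall n, (n < N)%nat -> A n -> B n) -> dyadic_partial A N <= dyadic_partial B N.
Proof.
  induction N as [|N IH]; intros AB; simpl; [lra|].
  assert (dyadic_partial A N <= dyadic_partial B N) by (apply IH; auto).
  assert (dyadic_digit A N <= dyadic_digit B N) by (apply dyadic_digit_mono; auto).
  lra.
Qed.

Lemma dyadic_partial_gap (A B : nat -> Prop) n N :
  (forall m, A m -> B m) -> B n -> ~ A n -> (n < N)%nat ->
  dyadic_partial A N + (/2) ^ S n <= dyadic_partial B N.
Proof.
  intros AB Bn nAn. induction N as [|N IH]; intros HnN; [lia|]. cbn [dyadic_partial].
  assert (dyadic_digit A N <= dyadic_digit B N) by (apply dyadic_digit_mono; auto).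
  destruct (Nat.eq_dec n N) as [<-|HnN'].
  - assert (dyadic_partial A n <= dyadic_partial B n)
      by (apply dyadic_partial_mono; auto).
    rewrite (dyadic_digit_out A n nAn), (dyadic_digit_in B n Bn); lra.
  - assert (dyadic_partial A N + (/2) ^ S n <= dyadic_partial B N) by (apply IH; lia).
    lra.
Qed.

Lemma dyadic_partials_bounded A : bound (fun v => exists N, v = dyadic_partial A N).
Proof.
  exists 1. intros v [N ->].
  pose proof (dyadic_partial_le A N 0); simpl in *; lra.
Qed.

Lemma dyadic_partials_inhabited A : exists v, exists N, v = dyadic_partial A N.
Proof. exists 0, O; reflexivity. Qed.

Definition dyadic_mass (A : nat -> Prop) : R :=
  proj1_sig (completeness _ (dyadic_partials_bounded A) (dyadic_partials_inhabited A)).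

Lemma dyadic_partial_le_mass A N : dyadic_partial A N <= dyadic_mass A.
Proof.
  unfold dyadic_mass; destruct completeness as [m Hm]; simpl.
  apply (proj1 Hm); eauto.
Qed.

Lemma dyadic_mass_le A v : (forall N, dyadic_partial A N <= v) -> dyadic_mass A <= v.
Proof.
  intros Hv. unfold dyadic_mass; destruct completeness as [m Hm]; simpl.
  apply (proj2 Hm). intros x [N ->]; auto.
Qed.

Lemma dyadic_mass_le_partial A N : dyadic_mass A <= dyadic_partial A N + (/2) ^ N.
Proof. apply dyadic_mass_le; intros; apply dyadic_partial_le. Qed.

Lemma dyadic_mass_bounds A : 0 <= dyadic_mass A <= 1.
Proof.
  pose proof (dyadic_partial_le_mass A 0).
  pose proof (dyadic_mass_le_partial A 0). simpl in *; lra.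
Qed.

Lemma dyadic_mass_gap (A B : nat -> Prop) n :
  (forall m, A m -> B m) -> B n -> ~ A n ->
  dyadic_mass A + (/2) ^ S n <= dyadic_mass B.
Proof.
  intros AB Bn nAn.
  enough (dyadic_mass A <= dyadic_mass B - (/2) ^ S n) by lra.
  apply dyadic_mass_le. intros N.
  pose proof (dyadic_partial_shift A N (S n)).
  pose proof (dyadic_partial_gap A B n (N + S n) AB Bn nAn ltac:(lia)).
  pose proof (dyadic_partial_le_mass B (N + S n)). lra.
Qed.

Lemma dyadic_mass_empty (A : nat -> Prop) : (forall n, ~ A n) -> dyadic_mass A = 0.
Proof.
  intros HA. apply Rle_antisym; [|apply dyadic_mass_bounds].
  apply dyadic_mass_le. induction N as [|N IH]; simpl; [lra|].
  rewrite (dyadic_digit_out A N (HA N)); lra.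
Qed.

(** * Countable well-orders embedded in [0,1] *)

Lemma well_founded_minimal (U : Type) (lt : U -> U -> Prop) (P : U -> Prop) :
  well_founded lt -> (exists a, P a) -> exists m, P m /\ forall x, lt x m -> ~ P x.
Proof.
  intros wf [a Pa]. induction (wf a) as [a _ IH].
  destruct (classic (exists x, lt x a /\ P x)) as [[x [Hxa Px]]|Hmin].
  - exact (IH x Hxa Px).
  - exists a. split; [exact Pa|]. intros x Hxa Px. apply Hmin; eauto.
Qed.

Lemma strict_well_order_option (T : Type) (lt : T -> T -> Prop) :
  strict_well_order T lt -> strict_well_order (option T) (succ_lt T lt).
Proof.
  intros [irr [trans [tri wf]]]. split; [|split; [|split]].
  - intros [a|]; simpl; auto.
  - intros [a|] [b|] [c|]; simpl; eauto; contradiction.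
  - intros [a|] [b|]; simpl; auto.
    destruct (tri a b) as [H|[->|H]]; auto.
  - assert (Acc_Some : forall t, Acc (succ_lt T lt) (Some t)).
    { intros t. induction (wf t) as [t _ IH].
      constructor. intros [y|] Hy; simpl in Hy; [auto|contradiction]. }
    intros [t|]; [auto|].
    constructor. intros [y|] Hy; simpl in Hy; [auto|contradiction].
Qed.

Definition option_code (T : Type) (code : T -> nat) (a : option T) : nat :=
  match a with None => O | Some t => S (code t) end.

Lemma option_code_inj (T : Type) (code : T -> nat) :
  (forall a b, code a = code b -> a = b) ->
  forall a b, option_code T code a = option_code T code b -> a = b.
Proof. intros inj [a|] [b|]; simpl; intros H; try congruence. f_equal; auto. Qed.

Section OrdinalEmbedding.

Variables (U : Type) (lt : U -> U -> Prop) (code : U -> nat).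
Hypothesis W : strict_well_order U lt.
Hypothesis code_inj : forall a b, code a = code b -> a = b.

Definition codes_below (b : U) (n : nat) : Prop := exists s, code s = n /\ lt s b.

Definition ordinal_point (b : U) : R := dyadic_mass (codes_below b).

Lemma ordinal_point_I01 b : I01 (ordinal_point b).
Proof. apply dyadic_mass_bounds. Qed.

Lemma ordinal_point_gap a b :
  lt a b -> ordinal_point a + (/2) ^ S (code a) <= ordinal_point b.
Proof.
  destruct W as [irr [trans _]]. intros Hab. apply dyadic_mass_gap.
  - intros n [s [Hs Hsa]]. exists s; eauto.
  - exists a; auto.
  - intros [s [Hs Hsa]]. apply code_inj in Hs; subst s. exact (irr a Hsa).
Qed.

Lemma ordinal_point_lt a b : lt a b -> ordinal_point a < ordinal_point b.
Proof.
  intros Hab. pose proof (ordinal_point_gap a b Hab).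
  pose proof (half_pow_pos (S (code a))). lra.
Qed.

Lemma ordinal_point_le_iff a b : ordinal_point a <= ordinal_point b <-> a = b \/ lt a b.
Proof.
  destruct W as [_ [_ [tri _]]]. split.
  - intros Hle. destruct (tri a b) as [H|[H|H]]; auto.
    pose proof (ordinal_point_lt b a H). lra.
  - intros [<-|H]; [lra|]. apply Rlt_le, ordinal_point_lt, H.
Qed.

Lemma ordinal_point_inj a b : ordinal_point a = ordinal_point b -> a = b.
Proof.
  destruct W as [_ [_ [tri _]]]. intros E.
  destruct (tri a b) as [H|[H|H]]; auto;
    apply ordinal_point_lt in H; lra.
Qed.

Lemma ordinal_point_gap_free a e :
  ~ (ordinal_point a < ordinal_point e < ordinal_point a + (/2) ^ S (code a)).
Proof.
  destruct W as [_ [_ [tri _]]]. intros He.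
  destruct (tri e a) as [H|[->|H]].
  - apply ordinal_point_lt in H; lra.
  - lra.
  - apply ordinal_point_gap in H; lra.
Qed.

Lemma ordinal_points_gaps a b :
  ordinal_point a < ordinal_point b ->
  exists c, ordinal_point a < c < ordinal_point b /\ forall e, ordinal_point e <> c.
Proof.
  destruct W as [_ [_ [tri _]]]. intros Hab.
  pose proof (half_pow_pos (S (code a))) as Hw.
  exists (ordinal_point a + (/2) ^ S (code a) / 2). split; [split|].
  - lra.
  - destruct (tri a b) as [H|[<-|H]]; [|lra|apply ordinal_point_lt in H; lra].
    apply ordinal_point_gap in H; lra.
  - intros e He. apply (ordinal_point_gap_free a e). lra.
Qed.

Lemma limit_dominates_codes (a0 b : U) :
  lt a0 b -> (forall p, lt p b -> exists a, lt p a /\ lt a b) ->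
  forall N, exists a, lt a b /\ forall s, (code s < N)%nat -> lt s b -> lt s a.
Proof.
  destruct W as [_ [trans [tri _]]]. intros Ha0 Hlim.
  induction N as [|N [a [Hab Ha]]].
  - exists a0. split; [exact Ha0|]. intros; lia.
  - destruct (classic (exists s, code s = N /\ lt s b)) as [[s [Hs Hsb]]|Hnone].
    + assert (Hm : exists m, lt m b /\ (a = m \/ lt a m) /\ (s = m \/ lt s m)).
      { destruct (tri a s) as [H|[<-|H]]; [exists s|exists a|exists a]; auto. }
      destruct Hm as [m [Hmb [Ham Hsm]]]. destruct (Hlim m Hmb) as [a' [Hma' Ha'b]].
      exists a'. split; [exact Ha'b|]. intros s' Hs' Hs'b.
      destruct (Nat.eq_dec (code s') N) as [E|E].
      * assert (s' = s) as -> by (apply code_inj; congruence).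
        destruct Hsm as [<-|Hsm]; eauto.
      * assert (lt s' a) by (apply Ha; auto; lia).
        destruct Ham as [<-|Ham]; eauto.
    + exists a. split; [exact Hab|]. intros s Hs Hsb.
      destruct (Nat.eq_dec (code s) N) as [E|E]; [exfalso; eauto|].
      apply Ha; auto; lia.
Qed.

Lemma ordinal_point_limit (a0 b : U) :
  lt a0 b -> (forall p, lt p b -> exists a, lt p a /\ lt a b) ->
  forall r, 0 < r -> exists a, lt a b /\ ordinal_point b - r < ordinal_point a.
Proof.
  intros Ha0 Hlim r Hr.
  destruct (pow_lt_1_zero (/2) ltac:(rewrite Rabs_pos_eq; lra) r Hr) as [N HN].
  specialize (HN N (le_n N)). rewrite Rabs_pos_eq in HN by (apply pow_le; lra).
  destruct (limit_dominates_codes a0 b Ha0 Hlim N) as [a [Hab Ha]].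
  exists a. split; [exact Hab|]. unfold ordinal_point.
  pose proof (dyadic_mass_le_partial (codes_below b) N).
  pose proof (dyadic_partial_le_mass (codes_below a) N).
  assert (dyadic_partial (codes_below b) N <= dyadic_partial (codes_below a) N).
  { apply dyadic_partial_mono. intros n Hn [s [<- Hsb]]. exists s; auto. }
  lra.
Qed.

(* The point of the least element above [c] stays away from c: the
   predecessor case is a gap, and a limit is the supremum of the points below. *)
Lemma ordinal_point_separated_below (b : U) (c : R) :
  c < ordinal_point b -> (forall a, lt a b -> ordinal_point a < c) ->
  exists r, 0 < r /\ forall a, lt a b -> r <= c - ordinal_point a.
Proof.
  destruct W as [_ [_ [tri _]]]. intros Hcb Hbelow.
  destruct (classic (exists p, lt p b /\ forall a, lt a b -> ~ lt p a))
    as [[p [Hpb Hp]]|Hnopred].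
  - exists (c - ordinal_point p). split; [specialize (Hbelow p Hpb); lra|].
    intros a Hab. enough (ordinal_point a <= ordinal_point p) by lra.
    apply ordinal_point_le_iff. destruct (tri a p) as [H|[H|H]]; auto.
    destruct (Hp a Hab H).
  - destruct (classic (exists a0, lt a0 b)) as [[a0 Ha0]|Hbot].
    + exfalso.
      assert (Hlim : forall p, lt p b -> exists a, lt p a /\ lt a b).
      { intros p Hpb. apply NNPP. intros Hn. apply Hnopred.
        exists p. split; [exact Hpb|]. intros a Hab Hpa. apply Hn; eauto. }
      destruct (ordinal_point_limit a0 b Ha0 Hlim (ordinal_point b - c)) as [a [Hab Ha]];
        [lra|].
      specialize (Hbelow a Hab). lra.
    + exists 1. split; [lra|]. intros a Hab. exfalso; eauto.
Qed.

Variable top : U.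
Hypothesis top_greatest : forall a, a = top \/ lt a top.

Lemma ordinal_point_minimum : exists m, ordinal_point m = 0.
Proof.
  destruct W as [_ [_ [_ wf]]].
  destruct (well_founded_minimal U lt (fun _ => True) wf) as [m [_ Hm]]; [eauto|].
  exists m. apply dyadic_mass_empty. intros n [s [_ Hs]]. exact (Hm s Hs I).
Qed.

Lemma ordinal_points_closed (c : R) :
  (forall a, ordinal_point a <> c) ->
  exists r, 0 < r /\ forall a, r <= Rabs (c - ordinal_point a).
Proof.
  destruct W as [_ [_ [tri wf]]]. intros Hc.
  destruct (classic (exists a, c < ordinal_point a)) as [Habove|Hnone].
  - destruct (well_founded_minimal U lt _ wf Habove) as [b [Hcb Hmin]].
    assert (Hbelow : forall a, lt a b -> ordinal_point a < c).
    { intros a Hab. specialize (Hmin a Hab). specialize (Hc a).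
      apply Rnot_le_lt. intros H. destruct H; [contradiction|congruence]. }
    destruct (ordinal_point_separated_below b c Hcb Hbelow) as [r [Hr Hsep]].
    exists (Rmin r (ordinal_point b - c)). split; [apply Rmin_glb_lt; lra|].
    intros a. pose proof (Rmin_l r (ordinal_point b - c)) as Hmin_l.
    pose proof (Rmin_r r (ordinal_point b - c)) as Hmin_r.
    destruct (tri a b) as [H|[->|H]].
    + specialize (Hsep a H). rewrite Rabs_pos_eq; lra.
    + rewrite Rabs_minus_sym, Rabs_pos_eq; lra.
    + apply ordinal_point_lt in H. rewrite Rabs_minus_sym, Rabs_pos_eq; lra.
  - assert (Htop : ordinal_point top < c).
    { specialize (Hc top). apply Rnot_le_lt. intros H.
      destruct H; [apply Hnone; eauto|congruence]. }
    exists (c - ordinal_point top). split; [lra|]. intros a.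
    assert (ordinal_point a <= ordinal_point top)
      by (apply ordinal_point_le_iff; destruct (top_greatest a); auto).
    rewrite Rabs_pos_eq; lra.
Qed.

End OrdinalEmbedding.

(** * The map [z |-> z - dist(z, K)] *)

Lemma chain_component_eq (f : R -> R) (A B : ChainComp f) :
  (forall y, proj1_sig A y <-> proj1_sig B y) -> A = B.
Proof.
  destruct A as [A HA], B as [B HB]. simpl. intros E. apply subset_eq_compat.
  apply functional_extensionality. intros y. apply propositional_extensionality, E.
Qed.

Section DescentMap.

Variable K : R -> Prop.
Hypothesis K_inhabited : exists k, K k.

Lemma neg_dist_set_bounded z : bound (fun v => exists k, K k /\ v = - Rabs (z - k)).
Proof. exists 0. intros v [k [_ ->]]. pose proof (Rabs_pos (z - k)). lra. Qed.

Lemma neg_dist_set_inhabited z : exists v, exists k, K k /\ v = - Rabs (z - k).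
Proof. destruct K_inhabited as [k Hk]. eauto. Qed.

Definition dist_K (z : R) : R :=
  - proj1_sig (completeness _ (neg_dist_set_bounded z) (neg_dist_set_inhabited z)).

Lemma dist_K_le z k : K k -> dist_K z <= Rabs (z - k).
Proof.
  intros Hk. unfold dist_K. destruct completeness as [m Hm]. simpl.
  enough (- Rabs (z - k) <= m) by lra. apply (proj1 Hm); eauto.
Qed.

Lemma dist_K_ge z r : (forall k, K k -> r <= Rabs (z - k)) -> r <= dist_K z.
Proof.
  intros Hr. unfold dist_K. destruct completeness as [m Hm]. simpl.
  enough (m <= - r) by lra. apply (proj2 Hm). intros v [k [Hk ->]]. specialize (Hr k Hk). lra.
Qed.

Lemma dist_K_nonneg z : 0 <= dist_K z.
Proof. apply dist_K_ge. intros; apply Rabs_pos. Qed.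

Lemma dist_K_triangle z z' : dist_K z <= Rabs (z - z') + dist_K z'.
Proof.
  enough (dist_K z - Rabs (z - z') <= dist_K z') by lra.
  apply dist_K_ge. intros k Hk. pose proof (dist_K_le z k Hk).
  pose proof (Rabs_triang (z - z') (z' - k)).
  replace (z - z' + (z' - k)) with (z - k) in * by ring. lra.
Qed.

Definition descent (z : R) : R := z - dist_K z.

Lemma descent_continuous : continuity descent.
Proof.
  intros x eps Heps. exists (eps / 2). split; [lra|].
  intros y [_ Hyx]. simpl in *. unfold R_dist, descent in *.
  pose proof (dist_K_triangle x y). pose proof (dist_K_triangle y x).
  rewrite Rabs_minus_sym in *. unfold Rabs in *.
  repeat destruct Rcase_abs; lra.
Qed.

Lemma descent_below z k : K k -> k <= z -> k <= descent z <= z.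
Proof.
  intros Hk Hkz. unfold descent.
  pose proof (dist_K_le z k Hk). pose proof (dist_K_nonneg z).
  rewrite Rabs_pos_eq in * by lra. lra.
Qed.

Lemma descent_maps_I01 : K 0 -> maps_I01 descent.
Proof. intros H0 z [Hz0 Hz1]. pose proof (descent_below z 0 H0 Hz0). split; lra. Qed.

(* Below [c] the map pushes every point at least [dist_K c] below [c], so
   small perturbations never cross [c]. *)
Lemma no_eps_chain_across c :
  0 < dist_K c -> exists e0, 0 < e0 /\ forall eps x y,
    0 < eps <= e0 -> x <= c -> c <= y -> ~ eps_chain descent eps x y.
Proof.
  intros Hc. exists (dist_K c / 2). split; [lra|].
  intros eps x y Heps Hxc Hcy [n [s [Hn [Hs0 [Hsn [_ Hstep]]]]]].
  assert (Hstay : forall z w, z <= c -> Rabs (descent z - w) < eps -> w < c).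
  { intros z w Hz Hw. unfold descent in Hw.
    pose proof (dist_K_triangle c z). rewrite Rabs_pos_eq in * by lra.
    apply Rabs_def2 in Hw. lra. }
  assert (Hbelow : forall i, (i <= n)%nat -> s i < c \/ i = O).
  { induction i as [|i IH]; intros Hi; [auto|]. left.
    apply (Hstay (s i)); [|apply Hstep; lia].
    destruct (IH ltac:(lia)) as [H| ->]; lra. }
  destruct (Hbelow n (le_n n)) as [H|H]; lra || lia.
Qed.

Fixpoint descent_staircase (k x h : R) (i : nat) : R :=
  match i with
  | O => x
  | S i => Rmax k (descent (descent_staircase k x h i) - h)
  end.

Lemma descent_staircase_bounds k x h i :
  K k -> k <= x -> 0 < h ->
  k <= descent_staircase k x h i <= x /\
  descent_staircase k x h i <= Rmax k (x - INR i * h).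
Proof.
  intros Hk Hkx Hh. induction i as [|i [[IH1 IH2] IH3]]; simpl descent_staircase.
  - simpl. rewrite Rmult_0_l, Rminus_0_r. split; [lra|apply Rmax_r].
  - pose proof (descent_below _ k Hk IH1). rewrite S_INR.
    unfold Rmax in *. repeat destruct Rle_dec; lra.
Qed.

Hypothesis K_I01 : forall k, K k -> I01 k.

(* Follow the map, shifted down by [eps/2], until reaching [k]. *)
Lemma eps_chain_down_to k x eps : K k -> k <= x <= 1 -> 0 < eps -> eps_chain descent eps x k.
Proof.
  intros Hk Hkx Heps. set (h := eps / 2). assert (Hh : 0 < h) by (unfold h; lra).
  pose proof (K_I01 k Hk) as [Hk0 _].
  destruct (INR_archimed h (x - k) Hh) as [n Hn].
  exists (S n), (descent_staircase k x h). split; [lia|]. split; [reflexivity|]. split; [|split].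
  - destruct (descent_staircase_bounds k x h (S n) Hk ltac:(lra) Hh) as [[H1 _] H2].
    rewrite S_INR, Rmax_left in H2 by nra. lra.
  - intros i _. destruct (descent_staircase_bounds k x h i Hk ltac:(lra) Hh) as [[H1 H2] _].
    split; lra.
  - intros i _. simpl descent_staircase.
    destruct (descent_staircase_bounds k x h i Hk ltac:(lra) Hh) as [[H1 _] _].
    pose proof (descent_below _ k Hk H1).
    unfold Rmax, h in *. destruct Rle_dec; rewrite Rabs_pos_eq; lra.
Qed.

Hypothesis K_closed :
  forall c, ~ K c -> exists r, 0 < r /\ forall k, K k -> r <= Rabs (c - k).

Lemma no_chain_across c x y : ~ K c -> x <= c <= y -> ~ chain_rel descent x y.
Proof.
  intros Hc Hxy Hchain. destruct (K_closed c Hc) as [r [Hr Hsep]].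
  assert (Hdist : 0 < dist_K c) by (pose proof (dist_K_ge c r Hsep); lra).
  destruct (no_eps_chain_across c Hdist) as [e0 [He0 Hno]].
  apply (Hno e0 x y); try lra. apply Hchain; lra.
Qed.

Lemma chain_recurrent_descent_iff x : CR descent x <-> K x.
Proof.
  split.
  - intros [Hx Hchain]. apply NNPP. intros Hnx. exact (no_chain_across x x x Hnx ltac:(lra) Hchain).
  - intros Hx. pose proof (K_I01 x Hx) as Hx01. split; [exact Hx01|].
    intros eps Heps. apply eps_chain_down_to; [exact Hx|destruct Hx01; lra|exact Heps].
Qed.

Hypothesis K_gaps : forall x y, K x -> K y -> x < y -> exists c, x < c < y /\ ~ K c.

Lemma chain_rel_descent_iff x y : K x -> K y -> chain_rel descent x y <-> y <= x.
Proof.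
  intros Hx Hy. split.
  - intros Hchain. apply Rnot_lt_le. intros Hxy.
    destruct (K_gaps x y Hx Hy Hxy) as [c [Hc Hnc]].
    exact (no_chain_across c x y Hnc ltac:(lra) Hchain).
  - intros Hyx eps Heps. apply eps_chain_down_to; auto.
    destruct (K_I01 x Hx); lra.
Qed.

Lemma chain_class_descent_iff x y : K x -> (CR descent y /\ chainE descent x y <-> y = x).
Proof.
  intros Hx. rewrite chain_recurrent_descent_iff. split.
  - intros [Hy [Hxy Hyx]].
    apply chain_rel_descent_iff in Hxy, Hyx; auto. lra.
  - intros ->. split; [exact Hx|]. split; apply chain_rel_descent_iff; auto; lra.
Qed.


Lemma descent_chain_components_iso (U : Type) (leU : U -> U -> Prop) (p : U -> R) :
  (forall a b, p a = p b -> a = b) ->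
  (forall a b, p a <= p b <-> leU a b) ->
  (forall x, K x <-> exists a, x = p a) ->
  exists h, order_iso (ChainComp descent) U (comp_le descent) leU h.
Proof.
  intros p_inj p_le HK.
  assert (HKp : forall a, K (p a)) by (intros a; apply HK; eauto).
  assert (Hpoint : forall A : ChainComp descent, exists a, forall y, proj1_sig A y <-> y = p a).
  { intros [A [x [Hx ->]]]. simpl.
    apply chain_recurrent_descent_iff, HK in Hx as [a ->].
    exists a. intros y. apply chain_class_descent_iff, HKp. }
  set (h A := proj1_sig (constructive_indefinite_description _ (Hpoint A))).
  assert (Hh : forall A y, proj1_sig A y <-> y = p (h A)).
  { intros A y. unfold h. destruct constructive_indefinite_description as [a Ha]. apply Ha. }
  exists h. split; [|split].
  - intros A B E. apply chain_component_eq. intros y. rewrite Hh, Hh, E. tauto.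
  - intros a.
    assert (Hcomp : is_chain_component descent
                      (fun y => CR descent y /\ chainE descent (p a) y)).
    { exists (p a). split; [apply chain_recurrent_descent_iff, HKp|reflexivity]. }
    exists (exist _ _ Hcomp). apply p_inj. symmetry.
    apply (Hh (exist _ _ Hcomp)). simpl. apply chain_class_descent_iff; auto.
  - intros A B. rewrite <- p_le. split.
    + intros [x [y [Hx [Hy Hyx]]]]. apply Hh in Hx, Hy. subst x y.
      apply chain_rel_descent_iff in Hyx; auto.
    + intros Hle. exists (p (h A)), (p (h B)).
      rewrite !Hh. split; [reflexivity|]. split; [reflexivity|].
      apply chain_rel_descent_iff; auto.
Qed.

End DescentMap.

Theorem theorem2p3 :
  forall (T : Type) (lt : T -> T -> Prop),
    countable_type T -> strict_well_order T lt ->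
    exists f : R -> R,
      continuity f /\ maps_I01 f /\
      exists h : ChainComp f -> option T,
        order_iso (ChainComp f) (option T) (comp_le f) (succ_le T lt) h.
Proof.
  intros T lt [code code_inj] W.
  pose proof (strict_well_order_option T lt W) as W'.
  pose proof (option_code_inj T code code_inj) as code'_inj.
  assert (top : forall a, a = None \/ succ_lt T lt a None) by (intros [a|]; simpl; auto).
  set (p := ordinal_point (option T) (succ_lt T lt) (option_code T code)).
  set (K x := exists a, x = p a).
  assert (K_inhabited : exists x, K x) by (exists (p None), None; reflexivity).
  exists (descent K K_inhabited). split; [apply descent_continuous|]. split.
  { apply descent_maps_I01.
    destruct (ordinal_point_minimum _ _ (option_code T code) W' None) as [m Hm]. exists m; auto. }
  apply descent_chain_components_iso with (p := p).
  - intros x [a ->]. apply ordinal_point_I01.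
  - intros c Hc.
    destruct (ordinal_points_closed _ _ _ W' code'_inj None top c) as [r [Hr Hsep]].
    { intros a E. apply Hc. exists a; auto. }
    exists r. split; [exact Hr|]. intros x [a ->]. apply Hsep.
  - intros x y [a ->] [b ->] Hab.
    destruct (ordinal_points_gaps _ _ _ W' code'_inj a b Hab) as [c [Hc Hne]].
    exists c. split; [exact Hc|]. intros [e He]. exact (Hne e (eq_sym He)).
  - apply ordinal_point_inj; auto.
  - apply ordinal_point_le_iff; auto.
  - tauto.
Qed.
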